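(* Suppose every IDR of the system $\mathcal{I}(E,\mathcal{F}(E))$ is of Restricted Case I form, and let $E'\subsetneq E$. Then for any two distinct entities $e_i\neq e_j$ in $E$, exactly one of the following holds or more than one holds: (a) $PS(e_i\mid E')\subseteq PS(e_j\mid E')$, (b) $PS(e_j\mid E')\subseteq PS(e_i\mid E')$, (c) $PS(e_i\mid E')\cap PS(e_j\mid E')=\emptyset$; that is, at least one of (a), (b), (c) holds.
   Context: A system $\mathcal{I}(E,\mathcal{F}(E))$ consists of a finite set $E$ of entities, $n=|E|$, and a set $\mathcal{F}(E)$ of interdependency relations (IDRs). Each entity $e$ has at most one IDR, of the form $e\leftarrow \sum_{i=1}^{m}\prod_{x\in s_i}x$ (a disjunction of conjunctions), where each minterm $s_i$ is a nonempty subset of $E$; it means $e$ is operational only if for at least one minterm all entities of that minterm are operational. Entities without an IDR can only fail initially. Failure dynamics: given an initially failing set $E'\subseteq E$ and a set $H\subseteq E$ of hardened entities (hardened entities never fail), put $F_0=E'\setminus H$ and $F_{t+1}=F_t\cup\{e\in E\setminus H: e \text{ has an IDR and every minterm of it contains an element of } F_t\}$; the final failed set is $F(E',H):=F_{n-1}$. $\mathrm{KillSet}(E'):=F(E',\emptyset)$. Protection set: $PS(H\mid E'):=\mathrm{KillSet}(E')\setminus F(E',H)$, and $PS(e\mid E'):=PS(\{e\}\mid E')$. Restricted Case I: every IDR consists of a single minterm of size one, i.e. has the form $e_i\leftarrow e_j$ with $e_j\in E$. *)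

From mathcomp Require Import ssreflect ssrfun ssrbool eqtype ssrnat seq choice fintype finset.
Set Implicit Arguments. Unset Strict Implicit. Unset Printing Implicit Defensive.

(* A system I(E, F(E)): entities form a finite type E; each entity has at most
   one IDR, given as a list of minterms (each a nonempty set of entities),
   read as the disjunction of the conjunctions of the minterms. *)
Record system (E : finType) := System {
  idr : E -> option (seq {set E});
  idr_minterm_nonempty : forall e ms, idr e = Some ms ->
                           forall s, s \in ms -> s != set0
}.

Definition step (E : finType) (S : system E) (H F : {set E}) : {set E} :=
  F :|: [set e | (e \notin H) &&
                 (if idr S e is Some ms then all (fun s : {set E} => [exists x in s, x \in F]) ms
                  else false)].

Definition Fseq (E : finType) (S : system E) (E' H : {set E}) (t : nat) : {set E} :=
  iter t (step S H) (E' :\: H).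

Definition Ffinal (E : finType) (S : system E) (E' H : {set E}) : {set E} :=
  Fseq S E' H (#|E|.-1).

Definition KillSet (E : finType) (S : system E) (E' : {set E}) : {set E} :=
  Ffinal S E' set0.

Definition PS (E : finType) (S : system E) (H E' : {set E}) : {set E} :=
  KillSet S E' :\: Ffinal S E' H.

Definition PS1 (E : finType) (S : system E) (e : E) (E' : {set E}) : {set E} :=
  PS S [set e] E'.

Definition restricted_case_I (E : finType) (S : system E) : Prop :=
  forall e ms, idr S e = Some ms -> exists j : E, ms = [:: [set j]].

(* In Restricted Case I every entity x with an IDR x <- y has a single parent
   y, so failures propagate along the parent chain x, parent x, parent^2 x, ...
   An entity fails exactly when its chain reaches E' without meeting a hardened
   entity; hence e protects x iff the chain of x reaches E' and e lies on it no
   later than the first entity of E'. If x is protected by both e_i and e_j,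
   both lie on that initial segment of the chain of x, say e_i first; then
   every chain through e_i continues through e_j before it first meets E', so
   PS(e_i | E') is contained in PS(e_j | E'). *)
From mathcomp Require Import ssreflect ssrfun ssrbool eqtype ssrnat seq choice fintype finset.
From mathcomp Require Import zify.
Set Implicit Arguments. Unset Strict Implicit.

Section RestrictedCaseI.
Variables (E : finType) (S : system E) (E' : {set E}).
Hypothesis caseI : restricted_case_I S.

(* An entity without IDR is its own parent: it then fails only initially. *)
Definition parent (x : E) : E :=
  if idr S x is Some (s :: _) then odflt x [pick y in s] else x.

Lemma mem_step H F x :
  (x \in step S H F) = (x \in F) || (x \notin H) && (parent x \in F).
Proof.
rewrite /step /parent !inE.
case Hx: (idr S x) => [ms|]; last by case: (x \in F); rewrite ?andbF.
have [y ->] := caseI Hx.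
have -> : odflt x [pick z in [set y]] = y.
  by case: pickP => [z /set1P -> | /(_ y)]; rewrite ?set11.
rewrite /= andbT; congr (_ || (_ && _)).
apply/existsP/idP => [[z /andP [/set1P -> //]] | Fy].
by exists y; rewrite set11.
Qed.

Definition avoids (H : {set E}) x k := forall i, i <= k -> iter i parent x \notin H.

Lemma mem_Fseq H t x :
  x \in Fseq S E' H t <-> exists2 k, k <= t & iter k parent x \in E' /\ avoids H x k.
Proof.
elim: t x => [|t IH] x.
  rewrite /Fseq /= inE; split=> [/andP [xH xE'] | [k]].
    by exists 0 => //; split=> // i; rewrite leqn0 => /eqP ->.
  by rewrite leqn0 => /eqP -> [xE' /(_ 0 isT) xH]; rewrite xE' xH.
rewrite /Fseq iterS -/(Fseq S E' H t) mem_step; split.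
  case/orP => [/IH [k kt hk] | /andP [xH /IH [k kt [hE' hH]]]].
    by exists k => //; apply: leqW.
  exists k.+1 => //; rewrite iterSr; split=> // -[|i] ik //.
  by rewrite iterSr; apply: hH.
case=> -[|k] kt [hE' hH].
  by apply/orP; left; apply/IH; exists 0.
apply/orP; right; rewrite (hH 0 isT) /=; apply/IH; exists k => //.
by split=> [|i ik]; rewrite -iterSr //; apply: hH.
Qed.

Definition first_hit x k :=
  iter k parent x \in E' /\ forall i, i < k -> iter i parent x \notin E'.

Lemma first_hit_uniq x k1 k2 : first_hit x k1 -> first_hit x k2 -> k1 = k2.
Proof.
case=> hit1 miss1 [hit2 miss2]; case: (ltngtP k1 k2) => // lt_k.
  by move: (miss2 _ lt_k); rewrite hit1.
by move: (miss1 _ lt_k); rewrite hit2.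
Qed.

Lemma first_hit_iter x k a :
  first_hit x k -> a <= k -> first_hit (iter a parent x) (k - a).
Proof.
case=> hit miss ak; split=> [|i ik]; rewrite -iterD ?subnK //.
by apply: miss; lia.
Qed.

(* Before the first hit the chain is injective, so it hits within |E| - 1 steps. *)
Lemma first_hit_lt_card x k : first_hit x k -> k < #|E|.
Proof.
move=> [hit miss].
have chain_inj : injective (fun i : 'I_k.+1 => iter i parent x).
  move=> i j eq_ij; apply/val_inj.
  wlog lt_ij : i j eq_ij / i < j.
    by move=> IH; case: (ltngtP i j) => // ?; [|symmetry]; apply: IH.
  have : iter (k - j + i) parent x \in E' by rewrite iterD eq_ij -iterD subnK // -ltnS.
  by move: (ltn_ord j); rewrite ltnS => jk; rewrite (negbTE (miss _ _)) //; lia.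
by have := leq_card _ chain_inj; rewrite card_ord.
Qed.

Lemma mem_Ffinal H x :
  x \in Ffinal S E' H <-> exists2 k, first_hit x k & avoids H x k.
Proof.
rewrite /Ffinal mem_Fseq; split.
  case=> k _ [hit hH].
  have [m hit_m min_m] := ex_minnP (ex_intro (fun k => iter k parent x \in E') k hit).
  exists m; last by move=> i im; apply: hH; apply: leq_trans im (min_m _ hit).
  by split=> // i im; apply/negP => /min_m; rewrite leqNgt im.
case=> k hk hH; exists k; last by case: hk.
by have := first_hit_lt_card hk; lia.
Qed.

Lemma mem_PS1 e x :
  x \in PS1 S e E' <-> exists2 k, first_hit x k & exists2 i, i <= k & iter i parent x = e.
Proof.
rewrite /PS1 /PS /KillSet inE; split.
  case/andP => not_saved /mem_Ffinal [k hk _]; exists k => //.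
  have [/existsP [i /eqP hie] | no_e] := boolP [exists i : 'I_k.+1, iter i parent x == e].
    by exists i; rewrite // -ltnS.
  case/negP: not_saved; apply/mem_Ffinal; exists k => // i ik; apply/set1P => hie.
  by move/negP: no_e; apply; apply/existsP; exists (Ordinal (ik : i < k.+1)); apply/eqP.
case=> k hk [i ik hie]; apply/andP; split.
  apply/negP => /mem_Ffinal [k' hk' hH].
  by move: (hH i); rewrite -(first_hit_uniq hk hk') hie set11 => /(_ ik).
by apply/mem_Ffinal; exists k => // j _; rewrite inE.
Qed.

(* Any chain through e continues along the chain of e. *)
Lemma PS1_subset_iter e m d :
  first_hit e m -> d <= m -> PS1 S e E' \subset PS1 S (iter d parent e) E'.
Proof.
move=> he dm; apply/subsetP => y /mem_PS1 [k hk [c ck hce]].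
have := first_hit_iter hk ck; rewrite hce => /(first_hit_uniq he) mk.
apply/mem_PS1; exists k => //; exists (d + c); first lia.
by rewrite iterD hce.
Qed.

Lemma PS1_subset_chain x k a b : first_hit x k -> a <= b -> b <= k ->
  PS1 S (iter a parent x) E' \subset PS1 S (iter b parent x) E'.
Proof.
move=> hx ab bk; rewrite -(subnK ab) iterD.
by apply: PS1_subset_iter (first_hit_iter hx (leq_trans ab bk)) _; lia.
Qed.

End RestrictedCaseI.

Theorem theorem7 (E : finType) (S : system E) (E' : {set E})
    (hI : restricted_case_I S) (hE' : E' \proper [set: E])
    (ei ej : E) (hij : ei != ej) :
  PS1 S ei E' \subset PS1 S ej E' \/
  PS1 S ej E' \subset PS1 S ei E' \/
  [disjoint PS1 S ei E' & PS1 S ej E'].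
Proof.
have [no_common | [x /setIP [xi xj]]] := set_0Vmem (PS1 S ei E' :&: PS1 S ej E').
  by right; right; rewrite -setI_eq0 no_common.
have [k hk [a ak <-]] := (mem_PS1 E' hI _ _).1 xi.
have [k' hk' [b bk' <-]] := (mem_PS1 E' hI _ _).1 xj.
rewrite -(first_hit_uniq hk hk') in bk'.
have [ab | ba] := leqP a b.
  by left; apply: PS1_subset_chain hk ab bk'.
by right; left; apply: PS1_subset_chain hk (ltnW ba) ak.
Qed.
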